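(* Let $\Gamma$ be a locally finite weighted graph and let $X$ be a finite subset of its vertex set. Then the following are equivalent: (1) $\Delta(\mathbb{R}^\Gamma_{\Gamma\setminus X})=\Delta(\mathbb{R}^\Gamma)$; (2) every function $f:X\to\mathbb{R}$ extends to a harmonic function on all of $\Gamma$.
   Context: Weighted graph: undirected, no loops or multiple edges, weights $\omega_{xy}=\omega_{yx}>0$, $\deg x=\sum_{y\sim x}\omega_{xy}$. Laplacian: $\Delta f(x)=f(x)-\frac{1}{\deg x}\sum_{y\sim x}\omega_{xy}f(y)$ for $f\in\mathbb{R}^\Gamma$. For a set $Y$ of vertices, $\mathbb{R}^\Gamma_Y$ denotes the space of functions $\Gamma\to\mathbb{R}$ supported on $Y$. A function is harmonic if $\Delta f\equiv 0$. *)

From HB Require Import structures.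
From mathcomp Require Import all_boot all_order all_algebra.
From mathcomp Require Import classical_sets reals.
Set Implicit Arguments. Unset Strict Implicit. Unset Printing Implicit Defensive.
Import Order.TTheory GRing.Theory Num.Theory.
Local Open Scope ring_scope.

(* A locally finite weighted graph on a (possibly infinite) vertex type V:
   N x is the (finite, duplicate-free) list of neighbours of x, and
   w : V -> V -> R gives the edge weights (values on non-edges are irrelevant). *)
Definition lf_wgraph (R : realType) (V : eqType) (N : V -> seq V)
    (w : V -> V -> R) : Prop :=
  [/\ forall x, uniq (N x),
      forall x, x \notin N x,
      forall x y, (y \in N x) = (x \in N y),
      forall x y, w x y = w y x
    & forall x y, y \in N x -> 0 < w x y].

Definition wdeg (R : realType) (V : eqType) (N : V -> seq V)
    (w : V -> V -> R) (x : V) : R :=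
  \sum_(y <- N x) w x y.

Definition Lap (R : realType) (V : eqType) (N : V -> seq V)
    (w : V -> V -> R) (f : V -> R) : V -> R :=
  fun x => f x - (wdeg N w x)^-1 * \sum_(y <- N x) w x y * f y.

Definition harmonic (R : realType) (V : eqType) (N : V -> seq V)
    (w : V -> V -> R) (f : V -> R) : Prop :=
  forall x, Lap N w f x = 0.

Definition supported_off (R : realType) (V : eqType) (X : seq V) :
    set (V -> R) :=
  [set f | forall x, x \in X -> f x = 0].

From HB Require Import structures.
From mathcomp Require Import all_boot all_order all_algebra.
From mathcomp Require Import classical_sets reals boolp ring.
Import Order.TTheory GRing.Theory Num.Theory.
Local Open Scope ring_scope.
Local Open Scope classical_set_scope.

(* Δu = Δg with u vanishing on X exactly when g - u is a harmonic function
   agreeing with g on X. So both conditions say that every function is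
   congruent, modulo harmonic functions, to one vanishing on X. *)

Section Laplacian.

Variables (R : realType) (V : eqType) (N : V -> seq V) (w : V -> V -> R).

Lemma LapB (f g : V -> R) (x : V) :
  Lap N w (fun y => f y - g y) x = Lap N w f x - Lap N w g x.
Proof.
rewrite /Lap; under eq_bigr do rewrite mulrBr.
by rewrite sumrB mulrBr; ring.
Qed.

Lemma Lap_supported_off_harmonicP (X : seq V) (g : V -> R) :
  (Lap N w @` @supported_off R V X) (Lap N w g) <->
  exists2 h, harmonic N w h & {in X, h =1 g}.
Proof.
split.
- case=> u u0 Lu; exists (fun y => g y - u y).
    by move=> x; rewrite LapB Lu subrr.
  by move=> x xX; rewrite /= u0 ?subr0.
- case=> h hH hX; exists (fun y => g y - h y).
    by move=> x xX; rewrite hX ?subrr.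
  by apply: funext => x; rewrite LapB hH subr0.
Qed.

Lemma Lap_supported_offE (X : seq V) :
  Lap N w @` @supported_off R V X = Lap N w @` [set: V -> R] <->
  forall g : V -> R, exists2 h, harmonic N w h & {in X, h =1 g}.
Proof.
split=> [E g | ext].
  by apply/Lap_supported_off_harmonicP; rewrite E; exists g.
apply/seteqP; split=> [_ [u _ <-] | _ [g _ <-]]; first by exists u.
exact/Lap_supported_off_harmonicP.
Qed.

End Laplacian.

Theorem lemma5p3 (R : realType) (V : eqType) (N : V -> seq V)
    (w : V -> V -> R) (X : seq V) :
  lf_wgraph N w ->
  (Lap N w @` @supported_off R V X = Lap N w @` [set: V -> R] <->
   forall f : {x : V | x \in X} -> R,
     exists h : V -> R, harmonic N w h /\ forall x, h (val x) = f x).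
Proof.
move=> _; rewrite Lap_supported_offE; split=> [ext f | ext g].
- pose g x := if insub x is Some y then f y else 0 : R.
  have [h hH hX] := ext g; exists h; split=> // x.
  by rewrite hX ?(valP x) // /g valK.
- have [h [hH hX]] := ext (fun x : {x | x \in X} => g (val x)).
  by exists h => // x xX; rewrite (hX (exist _ x xX)).
Qed.
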